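(* Let $\mathcal{P}$ be a set of mutually commuting Pauli operators on $n$ qubits, and let $r$ be the number of independent generators of $\mathcal{P}$ (the $\mathbb{F}_2$-rank of its tableau). Run the qubitwise diagonalization algorithm described in the context on $\mathcal{P}$, choosing at every stage $\alpha$ a nonzero null vector of symplectic weight at most $r^{(\alpha)}+1$ (i.e. one corresponding to a dependent set of at most $r^{(\alpha)}+1$ columns of the tableau). Then the total number of CNOT gate conjugations in the resulting diagonalizing circuit is at most $nr-\frac{r(r+1)}{2}$.
   Context: A Pauli operator on $m$ qubits is encoded, up to phase, by $u=(\boldsymbol{x},\boldsymbol{z})\in\mathbb{F}_2^{2m}$ via $P=\bigotimes_{j=1}^m X^{x_j}Z^{z_j}$. For a set of Pauli operators, the tableau $(\mathcal{X}\mid\mathcal{Z})$ is the binary matrix whose rows encode the operators. An operator is diagonal on qubit $j$ if its $j$-th tensor factor is $I$ or $Z$. The symplectic weight of $(\boldsymbol{v},\boldsymbol{w})\in\mathbb{F}_2^{2m}$ is $\omega(\boldsymbol{v},\boldsymbol{w})=|\{j: (v_j,w_j)\neq(0,0)\}|$. Qubitwise diagonalization algorithm. Input: a set of mutually commuting Pauli operators on $n$ qubits. At stage $\alpha$: discard the qubits on which all operators are already diagonal; let $n^{(\alpha)}$ be the number of remaining qubits (stop if $n^{(\alpha)}=0$); let $T^{(\alpha)}$ be an independent generating set of the operators restricted to the remaining qubits, of size $r^{(\alpha)}$, and let $M^{(\alpha)}=(\mathcal{X}^{(\alpha)}\mid\mathcal{Z}^{(\alpha)})$ be its $r^{(\alpha)}\times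 2n^{(\alpha)}$ tableau. Choose a nonzero $(\boldsymbol{v},\boldsymbol{w})$ with $M^{(\alpha)}(\boldsymbol{v};\boldsymbol{w})=0$ over $\mathbb{F}_2$, and a qubit $i$ with $(v_i,w_i)\neq(0,0)$. Step 1: for each qubit $j$, if $v_j=0,w_j=1$ conjugate by $\mathrm{H}(j)$; if $v_j=w_j=1$ conjugate by $\mathrm{S}(j)$ then $\mathrm{H}(j)$. Step 2: for each $j\neq i$ with $(v_j,w_j)\neq(0,0)$, conjugate by $\mathrm{CNOT}(j,i)$. After this all operators are diagonal on qubit $i$; then proceed to stage $\alpha+1$. The output circuit is the composition of all gates used. *)

(* Pauli operators up to phase as rows of a binary tableau over 'F_2. *)
From HB Require Import structures.
From mathcomp Require Import all_boot all_order all_algebra.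
Set Implicit Arguments. Unset Strict Implicit. Unset Printing Implicit Defensive.
Import GRing.Theory.
Local Open Scope ring_scope.

(* A set of m Pauli operators on n qubits, encoded by its tableau (X | Z):
   row a encodes the operator  (x)_j X^{X a j} Z^{Z a j}. *)
Definition tableau (m n : nat) := ('M['F_2]_(m, n) * 'M['F_2]_(m, n))%type.

Definition commuting m n (T : tableau m n) : Prop :=
  forall a b : 'I_m,
    \sum_(j < n) (T.1 a j * T.2 b j + T.2 a j * T.1 b j) = 0.

Definition tab_rank m n (T : tableau m n) : nat := \rank (row_mx T.1 T.2).

(* Qubits on which some operator is not diagonal (tensor factor X or Y). *)
Definition remaining m n (T : tableau m n) : {set 'I_n} :=
  [set j | [exists a, T.1 a j != 0]].

(* Restriction of the operators to a set of qubits: the other columns are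
   dropped (here: zeroed, which does not change ranks or null vectors
   supported on the kept qubits). *)
Definition restrict m n (R : {set 'I_n}) (M : 'M['F_2]_(m, n)) : 'M['F_2]_(m, n) :=
  \matrix_(a, j) (if j \in R then M a j else 0).

Definition stage_rank m n (T : tableau m n) : nat :=
  let R := remaining T in tab_rank (restrict R T.1, restrict R T.2).

Inductive gate (n : nat) :=
| Hg of 'I_n
| Sg of 'I_n
| CNOTg of 'I_n & 'I_n. (* CNOT(control, target) *)

Definition is_cnot n (g : gate n) : bool :=
  if g is CNOTg _ _ then true else false.

Definition apply_gate m n (g : gate n) (T : tableau m n) : tableau m n :=
  match g with
  | Hg j => (\matrix_(a, k) (if k == j then T.2 a k else T.1 a k),
             \matrix_(a, k) (if k == j then T.1 a k else T.2 a k))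
  | Sg j => (T.1,
             \matrix_(a, k) (if k == j then T.2 a k + T.1 a k else T.2 a k))
  | CNOTg c t =>
      (* X_c -> X_c X_t, Z_t -> Z_c Z_t *)
      (\matrix_(a, k) (if k == t then T.1 a k + T.1 a c else T.1 a k),
       \matrix_(a, k) (if k == c then T.2 a k + T.2 a t else T.2 a k))
  end.

Definition apply_circuit m n (gs : seq (gate n)) (T : tableau m n) : tableau m n :=
  foldl (fun T' g => apply_gate g T') T gs.

Definition cnot_count n (gs : seq (gate n)) : nat := count (@is_cnot n) gs.

Definition step1_gates n (v w : 'I_n -> 'F_2) (j : 'I_n) : seq (gate n) :=
  if (v j == 0) && (w j == 1) then [:: Hg j]
  else if (v j == 1) && (w j == 1) then [:: Sg j; Hg j]
  else [::].

Definition in_support n (v w : 'I_n -> 'F_2) (j : 'I_n) : bool :=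
  (v j != 0) || (w j != 0).

Definition stage_gates n (v w : 'I_n -> 'F_2) (i : 'I_n) : seq (gate n) :=
  flatten [seq step1_gates v w j | j <- enum 'I_n] ++
  [seq CNOTg j i | j <- enum 'I_n & (j != i) && in_support v w j].

Definition stage m n (T : tableau m n) (gs : seq (gate n)) (T' : tableau m n) : Prop :=
  let R := remaining T in
  R != set0 /\
  exists (v w : 'I_n -> 'F_2) (i : 'I_n),
    [/\
        (forall j, j \notin R -> v j = 0 /\ w j = 0),
        (forall a, \sum_(j < n) (T.1 a j * v j + T.2 a j * w j) = 0),
        in_support v w i,
        (#|[set j | in_support v w j]| <= (stage_rank T).+1)%N &
        gs = stage_gates v w i /\ T' = apply_circuit gs T].

Inductive run m n : tableau m n -> seq (gate n) -> Prop :=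
| run_stop T : remaining T = set0 -> run T [::]
| run_step T gs T' gs' : stage T gs T' -> run T' gs' -> run T (gs ++ gs').

From mathcomp Require Import all_boot all_order all_algebra.
From mathcomp Require Import zify.
Set Implicit Arguments. Unset Strict Implicit. Unset Printing Implicit Defensive.
Import GRing.Theory.
Local Open Scope ring_scope.

(* A stage with null vector (v, w) and pivot i turns the pivot column of X
   into X v + Z w = 0 and leaves the X-columns outside the support of (v, w)
   untouched, so it diagonalizes qubit i for good: the number N of remaining
   qubits strictly decreases.  The stage uses |supp (v, w)| - 1 CNOTs, which is
   at most r^(alpha) <= r by the weight bound and at most N - 1.  Clifford
   conjugation never increases the rank, so r bounds every stage, and the total
   cost is at most sum_(k < n) min(r, k) = n r - r (r + 1) / 2, where r <= n
   because commuting Paulis span an isotropic subspace. *)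

Lemma F2P (x : 'F_2) : x = 0 \/ x = 1.
Proof. by case: x => [[|[|//]]] ?; [left | right]; apply: val_inj. Qed.

Lemma sum_mul_delta n (x : 'I_n -> 'F_2) (p : 'I_n) (b : bool) :
  \sum_(j < n) x j * ((j == p) && b)%:R = if b then x p else 0.
Proof.
rewrite (bigD1 p) //= eqxx big1 ?addr0; first by case: b; rewrite ?mulr1 ?mulr0.
by move=> j /negbTE ->; rewrite mulr0.
Qed.

Lemma tab_rank_lincomb_le m n (T T' : tableau m n)
    (c11 c12 c21 c22 : 'I_n -> 'I_n -> 'F_2) :
  (forall a k, T'.1 a k = \sum_j (T.1 a j * c11 j k + T.2 a j * c21 j k)) ->
  (forall a k, T'.2 a k = \sum_j (T.1 a j * c12 j k + T.2 a j * c22 j k)) ->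
  (tab_rank T' <= tab_rank T)%N.
Proof.
move=> T'1E T'2E; rewrite /tab_rank.
set C := block_mx (\matrix_(j, k) c11 j k) (\matrix_(j, k) c12 j k)
                  (\matrix_(j, k) c21 j k) (\matrix_(j, k) c22 j k).
suff -> : row_mx T'.1 T'.2 = row_mx T.1 T.2 *m C by exact: mxrankM_maxl.
rewrite mul_row_block; congr row_mx; apply/matrixP => a k; rewrite !mxE.
  by rewrite T'1E big_split; congr (_ + _); apply: eq_bigr => j _; rewrite mxE.
by rewrite T'2E big_split; congr (_ + _); apply: eq_bigr => j _; rewrite mxE.
Qed.

(* The rows of (Z | X), which is (X | Z) with its halves swapped, are
   orthogonal to those of (X | Z): the rank is at most half the width. *)
Lemma commuting_tab_rank_le m n (T : tableau m n) :
  commuting T -> (tab_rank T <= n)%N.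
Proof.
move=> commT; rewrite /tab_rank.
set A := row_mx T.1 T.2; set B := row_mx T.2 T.1.
set J := block_mx (0 : 'M['F_2]_(n, n)) 1%:M 1%:M 0.
have BE : B = A *m J by rewrite mul_row_block !mulmx0 !mulmx1 add0r addr0.
have AE : A = B *m J by rewrite mul_row_block !mulmx0 !mulmx1 add0r addr0.
have rankB : \rank B = \rank A.
  by apply/eqP; rewrite eqn_leq {1}BE mxrankM_maxl /= AE mxrankM_maxl.
have AB0 : A *m B^T = 0.
  rewrite tr_row_mx mul_row_col; apply/matrixP => a b.
  rewrite !mxE -big_split -[RHS](commT a b).
  by apply: eq_bigr => j _; rewrite !mxE.
have := mxrankS (introT sub_kermxP AB0).
rewrite mxrank_ker mxrank_tr rankB; have := rank_leq_col A; lia.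
Qed.

Lemma gate_tab_rank_le m n (g : gate n) (T : tableau m n) :
  (tab_rank (apply_gate g T) <= tab_rank T)%N.
Proof.
pose id_on (P : pred 'I_n) (j k : 'I_n) : 'F_2 := ((j == k) && P k)%:R.
case: g => [q | q | c t] /=.
- apply: (@tab_rank_lincomb_le _ _ T _ (id_on (fun k => k != q))
    (id_on (eq_op^~ q)) (id_on (eq_op^~ q)) (id_on (fun k => k != q))) => a k;
  rewrite /= /id_on mxE big_split /= !sum_mul_delta;
  by case: (k == q); rewrite ?addr0 ?add0r.
- apply: (@tab_rank_lincomb_le _ _ T _ (id_on xpredT) (id_on (eq_op^~ q))
    (fun _ _ => 0) (id_on xpredT)) => a k.
    rewrite /id_on big_split /= !sum_mul_delta big1 ?addr0 // => j _.
    by rewrite mulr0.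
  rewrite /= /id_on mxE big_split /= !sum_mul_delta.
  by case: (k == q); rewrite ?addr0 ?add0r // addrC.
- apply: (@tab_rank_lincomb_le _ _ T _
    (fun j k => id_on xpredT j k + ((j == c) && (k == t))%:R) (fun _ _ => 0)
    (fun _ _ => 0) (fun j k => id_on xpredT j k + ((j == t) && (k == c))%:R))
    => a k.
    rewrite mxE big_split [X in _ = _ + X]big1 ?addr0 => [|j _]; last first.
      by rewrite mulr0.
    under eq_bigr do rewrite mulrDr.
    by rewrite big_split /= !sum_mul_delta; case: (k == t); rewrite ?addr0.
  rewrite mxE big_split big1 => [|j _]; last by rewrite mulr0.
  under eq_bigr do rewrite mulrDr.
  by rewrite big_split /= !sum_mul_delta add0r; case: (k == c); rewrite ?addr0.
Qed.

Lemma circuit_tab_rank_le m n (gs : seq (gate n)) (T : tableau m n) :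
  (tab_rank (apply_circuit gs T) <= tab_rank T)%N.
Proof.
elim: gs T => [|g gs IH] T //=.
by apply: leq_trans (IH _) _; apply: gate_tab_rank_le.
Qed.

Lemma stage_rank_le m n (T : tableau m n) : (stage_rank T <= tab_rank T)%N.
Proof.
pose id_in (j k : 'I_n) : 'F_2 := ((j == k) && (k \in remaining T))%:R.
apply: (@tab_rank_lincomb_le _ _ T _ id_in (fun _ _ => 0) (fun _ _ => 0) id_in)
  => a k /=.
all: rewrite mxE big_split /= !sum_mul_delta big1 ?addr0 ?add0r => [|j _].
all: by [case: (k \in remaining T) | rewrite mulr0].
Qed.

Definition touches n (g : gate n) (j : 'I_n) : bool :=
  match g with
  | Hg k | Sg k => k == j
  | CNOTg c t => (c == j) || (t == j)
  end.

Lemma apply_gate_untouched m n (g : gate n) (T : tableau m n) j a :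
  ~~ touches g j ->
  (apply_gate g T).1 a j = T.1 a j /\ (apply_gate g T).2 a j = T.2 a j.
Proof.
case: g => [k | k | c t] /=; rewrite ?negb_or => h; rewrite !mxE.
- by rewrite eq_sym (negbTE h).
- by rewrite eq_sym (negbTE h).
- by case/andP: h => hc ht; rewrite eq_sym (negbTE ht) eq_sym (negbTE hc).
Qed.

Lemma apply_circuit_untouched m n (gs : seq (gate n)) (T : tableau m n) j a :
  all (fun g => ~~ touches g j) gs ->
  (apply_circuit gs T).1 a j = T.1 a j /\ (apply_circuit gs T).2 a j = T.2 a j.
Proof.
elim: gs T => [|g gs IH] T //= /andP [hg hgs].
by have [<- <-] := apply_gate_untouched T a hg; apply: IH.
Qed.

Lemma apply_circuit_cat m n (gs1 gs2 : seq (gate n)) (T : tableau m n) :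
  apply_circuit (gs1 ++ gs2) T = apply_circuit gs2 (apply_circuit gs1 T).
Proof. exact: foldl_cat. Qed.

Lemma cnot_count_cat n (gs1 gs2 : seq (gate n)) :
  cnot_count (gs1 ++ gs2) = (cnot_count gs1 + cnot_count gs2)%N.
Proof. exact: count_cat. Qed.

Section Stage.

Variables (m n : nat) (v w : 'I_n -> 'F_2).
Implicit Types (T : tableau m n) (a : 'I_m) (i j k : 'I_n).

Definition step1_X T a k : 'F_2 :=
  if in_support v w k then T.1 a k * v k + T.2 a k * w k else T.1 a k.

Lemma step1_gates_X T a j :
  (apply_circuit (step1_gates v w j) T).1 a j = step1_X T a j.
Proof.
rewrite /step1_X /step1_gates /in_support.
case: (F2P (v j)) => ->; case: (F2P (w j)) => -> /=; rewrite ?eqxx /=.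
all: by rewrite ?mulr0 ?mulr1 ?addr0 ?add0r // !mxE eqxx // addrC.
Qed.

Lemma step1_gates_untouched j k :
  k != j -> all (fun g => ~~ touches g k) (step1_gates v w j).
Proof.
move=> kj; rewrite /step1_gates.
by case: ifP => _; [|case: ifP => _]; rewrite //= eq_sym kj.
Qed.

Lemma step1_circuit_X (js : seq 'I_n) T a k : uniq js ->
  (apply_circuit (flatten [seq step1_gates v w j | j <- js]) T).1 a k =
  if k \in js then step1_X T a k else T.1 a k.
Proof.
elim: js T => [|j js IH] T //= /andP [jNjs js_uniq].
rewrite apply_circuit_cat IH // in_cons.
have [-> | kj] := eqVneq k j; first by rewrite (negbTE jNjs) step1_gates_X.
have [Xk Zk] := apply_circuit_untouched T a (step1_gates_untouched kj).
by rewrite /step1_X Xk Zk.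
Qed.

Lemma cnot_ladder_X i (js : seq 'I_n) T a k : i \notin js ->
  (apply_circuit [seq CNOTg j i | j <- js] T).1 a k =
  if k == i then T.1 a i + \sum_(j <- js) T.1 a j else T.1 a k.
Proof.
elim: js T k => [|j js IH] T k /=.
  by rewrite big_nil addr0; case: eqP => [->|].
rewrite in_cons negb_or eq_sym => /andP [ji iNjs].
rewrite IH // big_cons !mxE eqxx; case: (k == i) => //; rewrite -addrA.
congr (_ + (_ + _)); rewrite !big_seq; apply: eq_bigr => j' j'js.
by rewrite mxE; case: eqP j'js iNjs => // -> ->.
Qed.

Lemma cnot_count_stage_gates i :
  cnot_count (stage_gates v w i) = #|[set j | in_support v w j] :\ i|.
Proof.
have step1_no_cnot (js : seq 'I_n) :
    cnot_count (flatten [seq step1_gates v w j | j <- js]) = 0%N.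
  elim: js => //= j js IH; rewrite cnot_count_cat IH addn0 /step1_gates.
  by case: ifP => _; [|case: ifP].
rewrite cnot_count_cat step1_no_cnot /cnot_count count_map.
rewrite (eq_count (a2 := predT)) // count_predT size_filter cardE /enum_mem.
rewrite add0n size_filter count_filter.
by apply: eq_count => j; rewrite !inE andbT.
Qed.

Lemma stage_gates_pivot_X i T a : in_support v w i ->
  (apply_circuit (stage_gates v w i) T).1 a i =
  \sum_j (T.1 a j * v j + T.2 a j * w j).
Proof.
move=> supp_i; rewrite /stage_gates apply_circuit_cat.
rewrite cnot_ladder_X; last by rewrite mem_filter eqxx.
rewrite eqxx !step1_circuit_X ?enum_uniq // mem_enum big_filter /=.
rewrite [RHS](bigID (in_support v w)) /= [X in _ = _ + X]big1 ?addr0 => [|j].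
  2: rewrite /in_support => /norP [/negPn/eqP -> /negPn/eqP ->].
  2: by rewrite !mulr0 addr0.
rewrite (bigD1 i supp_i) /= {1}/step1_X supp_i; congr (_ + _).
rewrite big_enum_cond /=; apply: eq_big => [j | j /andP [_ supp_j]].
  by rewrite andbC.
by rewrite step1_circuit_X ?enum_uniq // mem_enum /step1_X supp_j.
Qed.

Lemma stage_gates_X_unsupported i T a k : k != i -> ~~ in_support v w k ->
  (apply_circuit (stage_gates v w i) T).1 a k = T.1 a k.
Proof.
move=> ki kNsupp; rewrite /stage_gates apply_circuit_cat.
rewrite cnot_ladder_X ?mem_filter ?eqxx // (negbTE ki).
by rewrite step1_circuit_X ?enum_uniq // mem_enum /step1_X (negbTE kNsupp).
Qed.

End Stage.

Lemma in_support_subset n (R : {set 'I_n}) (v w : 'I_n -> 'F_2) :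
  (forall j, j \notin R -> v j = 0 /\ w j = 0) ->
  [set j | in_support v w j] \subset R.
Proof.
move=> vw0; apply/subsetP => j; rewrite inE; apply: contraLR.
by rewrite /in_support => /vw0 [-> ->]; rewrite eqxx.
Qed.

Lemma stage_remaining_lt m n (T T' : tableau m n) gs :
  stage T gs T' -> (#|remaining T'| < #|remaining T|)%N.
Proof.
case=> _ [v [w [i [vw0 null supp_i _ [-> ->]]]]].
have iR : i \in remaining T.
  by apply: (subsetP (in_support_subset vw0)); rewrite inE.
apply: (@leq_ltn_trans #|remaining T :\ i|).
  2: by rewrite (cardsD1 i (remaining T)) iR.
apply/subset_leq_card/subsetP => k; rewrite inE => /existsP [a]; apply: contraR.
rewrite in_setD1 negb_and negbK => /orP [/eqP -> | kNR]; apply/eqP.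
  by rewrite stage_gates_pivot_X // null.
have [vk wk] := vw0 _ kNR.
have kNi : k != i by apply: contraNneq kNR => ->.
have kNsupp : ~~ in_support v w k by rewrite /in_support vk wk eqxx.
rewrite stage_gates_X_unsupported //.
by move: kNR; rewrite inE negb_exists => /forallP /(_ a) /negPn/eqP.
Qed.

Lemma stage_cnot_count_le m n (T T' : tableau m n) gs : stage T gs T' ->
  (cnot_count gs <= stage_rank T)%N /\ (cnot_count gs < #|remaining T|)%N.
Proof.
case=> _ [v [w [i [vw0 _ supp_i weight [-> _]]]]].
rewrite cnot_count_stage_gates.
set S := [set j | in_support v w j] in weight *.
have cardS : #|S| = #|S :\ i|.+1 by rewrite (cardsD1 i S) inE supp_i.
have le_SR : (#|S| <= #|remaining T|)%N.
  exact: subset_leq_card (in_support_subset vw0).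
lia.
Qed.

Lemma stage_tab_rank_le m n (T T' : tableau m n) gs :
  stage T gs T' -> (tab_rank T' <= tab_rank T)%N.
Proof.
by case=> _ [v [w [i [_ _ _ _ [_ ->]]]]]; apply: circuit_tab_rank_le.
Qed.

Local Close Scope ring_scope.

Definition cnot_budget r N := \sum_(k < N) minn r k.

Lemma cnot_budgetS r N : cnot_budget r N.+1 = cnot_budget r N + minn r N.
Proof. exact: big_ord_recr. Qed.

Lemma cnot_budget_mono r : {homo cnot_budget r : N M / N <= M}.
Proof.
move=> N M /subnKC <-; elim: (M - N) => [|d IH]; first by rewrite addn0.
by rewrite addnS cnot_budgetS (leq_trans IH) ?leq_addr.
Qed.

Lemma bin2_add_binS N : 'C(N, 2) + 'C(N.+1, 2) = N * N.
Proof. by elim: N => // N IH; rewrite !binS !bin1 bin0 in IH *; nia. Qed.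

Lemma cnot_budget_small r N : N <= r -> cnot_budget r N = 'C(N, 2).
Proof.
elim: N => [|N IH] le_Nr; first by rewrite /cnot_budget big_ord0.
by rewrite cnot_budgetS IH ?(ltnW le_Nr) // (minn_idPr (ltnW le_Nr)) binS bin1.
Qed.

Lemma cnot_budget_large r N : r <= N -> cnot_budget r N + 'C(r.+1, 2) = N * r.
Proof.
elim: N => [|N IH].
  by rewrite leqn0 => /eqP ->; rewrite cnot_budget_small.
rewrite leq_eqVlt => /predU1P [-> | lt_rN].
  by rewrite cnot_budget_small // bin2_add_binS.
by rewrite cnot_budgetS (minn_idPl (lt_rN : r <= N)) mulSn -IH //; lia.
Qed.

Lemma run_cnot_count_le m n (T : tableau m n) gs r : run T gs ->
  tab_rank T <= r -> cnot_count gs <= cnot_budget r #|remaining T|.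
Proof.
move=> runT; elim: runT r => {T gs} [// | T gs T' gs' st _ IH] r rankT.
have [le_stage lt_rem] := stage_cnot_count_le st.
have le_gs : cnot_count gs <= minn r #|remaining T|.-1.
  rewrite leq_min (leq_trans le_stage) ?(leq_trans (stage_rank_le T)) //.
  by rewrite -ltnS (ltn_predK lt_rem).
have le_gs' := IH r (leq_trans (stage_tab_rank_le st) rankT).
have := stage_remaining_lt st.
case: #|remaining T| le_gs => // N le_gs /ltnSE le_rem'.
rewrite cnot_count_cat cnot_budgetS addnC leq_add //.
exact: leq_trans le_gs' (cnot_budget_mono r le_rem').
Qed.

Theorem theorem1 (n m : nat) (P : tableau m n) (gs : seq (gate n)) :
  commuting P -> run P gs ->
  (cnot_count gs <= n * tab_rank P - (tab_rank P * (tab_rank P).+1) %/ 2)%N.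
Proof.
move=> commP runP; set r := tab_rank P.
have le_rn : r <= n := commuting_tab_rank_le commP.
have le_rem_n : #|remaining P| <= n.
  by rewrite (leq_trans (max_card _)) ?card_ord.
have -> : (r * r.+1) %/ 2 = 'C(r.+1, 2) by rewrite bin2 divn2 mulnC.
rewrite -(cnot_budget_large le_rn) addnK.
apply: leq_trans (run_cnot_count_le runP (leqnn r)) _.
exact: cnot_budget_mono.
Qed.
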